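(* Let $X(s,t)=\gamma(s)+\frac{t}{\sqrt2}\bigl(V_2(s)+V_4(s)\bigr)$, $(s,t)\in I\times J$, and suppose $\kappa_2=\kappa_3$ on $I$ and $1-\frac{t}{\sqrt2}\kappa_1(s)\neq0$ on $I\times J$ (so $X$ is an immersion). Then $X$ is flat (its Gaussian curvature vanishes identically) and has flat normal bundle (its normal curvature vanishes identically).
   Context: Let $I,J\subset\mathbb{R}$ be open intervals and $\gamma:I\to\mathbb{R}^4$ a smooth unit-speed curve equipped with a smooth orthonormal frame $(V_1,V_2,V_3,V_4)$ along $\gamma$ and smooth functions $\kappa_1,\kappa_2,\kappa_3:I\to\mathbb{R}$ satisfying the Frenet equations $\gamma'=V_1$, $V_1'=\kappa_1V_2$, $V_2'=-\kappa_1V_1+\kappa_2V_3$, $V_3'=-\kappa_2V_2+\kappa_3V_4$, $V_4'=-\kappa_3V_3$. The normal curvature of a surface in $\mathbb{R}^4$ with orthonormal tangent frame $e_1,e_2$ and orthonormal normal frame $N_1,N_2$ is $K_N=\sum_{j=1}^{2}(h^1_{1j}h^2_{2j}-h^2_{1j}h^1_{2j})$ with $h^k_{ij}=\langle h(e_i,e_j),N_k\rangle$, $h$ the second fundamental form. *)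

From Stdlib Require Import Reals.
Open Scope R_scope.

Record Vec4 := mkV4 { c1 : R; c2 : R; c3 : R; c4 : R }.

Definition vadd (u v : Vec4) : Vec4 :=
  mkV4 (c1 u + c1 v) (c2 u + c2 v) (c3 u + c3 v) (c4 u + c4 v).
Definition vscale (a : R) (v : Vec4) : Vec4 :=
  mkV4 (a * c1 v) (a * c2 v) (a * c3 v) (a * c4 v).
Definition vdot (u v : Vec4) : R :=
  c1 u * c1 v + c2 u * c2 v + c3 u * c3 v + c4 u * c4 v.

Definition vderiv (f : R -> Vec4) (x : R) (v : Vec4) : Prop :=
  derivable_pt_lim (fun u => c1 (f u)) x (c1 v) /\
  derivable_pt_lim (fun u => c2 (f u)) x (c2 v) /\
  derivable_pt_lim (fun u => c3 (f u)) x (c3 v) /\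
  derivable_pt_lim (fun u => c4 (f u)) x (c4 v).

Definition is_open_interval (I : R -> Prop) : Prop :=
  (exists x, I x) /\
  (forall x y z, I x -> I z -> x <= y <= z -> I y) /\
  (forall x, I x -> exists e, 0 < e /\ forall y, Rabs (y - x) < e -> I y).

Definition smooth_on (I : R -> Prop) (f : R -> R) : Prop :=
  exists D : nat -> R -> R,
    (forall x, I x -> D O x = f x) /\
    (forall n x, I x -> derivable_pt_lim (D n) x (D (S n) x)).

Definition vsmooth_on (I : R -> Prop) (f : R -> Vec4) : Prop :=
  exists D : nat -> R -> Vec4,
    (forall x, I x -> D O x = f x) /\
    (forall n x, I x -> vderiv (D n) x (D (S n) x)).

Definition orthonormal4 (v1 v2 v3 v4 : Vec4) : Prop :=
  vdot v1 v1 = 1 /\ vdot v2 v2 = 1 /\ vdot v3 v3 = 1 /\ vdot v4 v4 = 1 /\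
  vdot v1 v2 = 0 /\ vdot v1 v3 = 0 /\ vdot v1 v4 = 0 /\
  vdot v2 v3 = 0 /\ vdot v2 v4 = 0 /\ vdot v3 v4 = 0.

Definition frenet (I : R -> Prop) (gamma V1 V2 V3 V4 : R -> Vec4)
  (k1 k2 k3 : R -> R) : Prop :=
  forall s, I s ->
    vderiv gamma s (V1 s) /\
    vderiv V1 s (vscale (k1 s) (V2 s)) /\
    vderiv V2 s (vadd (vscale (- k1 s) (V1 s)) (vscale (k2 s) (V3 s))) /\
    vderiv V3 s (vadd (vscale (- k2 s) (V2 s)) (vscale (k3 s) (V4 s))) /\
    vderiv V4 s (vscale (- k3 s) (V3 s)).

Definition ruled_X (gamma V2 V4 : R -> Vec4) (s t : R) : Vec4 :=
  vadd (gamma s) (vscale (t / sqrt 2) (vadd (V2 s) (V4 s))).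

Definition partials_of (X : R -> R -> Vec4) (I J : R -> Prop)
  (Xs Xt Xss Xst Xtt : R -> R -> Vec4) : Prop :=
  forall s t, I s -> J t ->
    vderiv (fun u => X u t) s (Xs s t) /\
    vderiv (fun w => X s w) t (Xt s t) /\
    vderiv (fun u => Xs u t) s (Xss s t) /\
    vderiv (fun w => Xs s w) t (Xst s t) /\
    vderiv (fun w => Xt s w) t (Xtt s t).

(** Second derivative of X applied to tangent vectors
    u = a Xs + b Xt, v = c Xs + d Xt (coordinates (a,b), (c,d)). *)
Definition d2X (Xss Xst Xtt : Vec4) (a b c d : R) : Vec4 :=
  vadd (vscale (a * c) Xss)
       (vadd (vscale (a * d + b * c) Xst) (vscale (b * d) Xtt)).

Definition adapted_frame (Xs Xt : Vec4) (a1 b1 a2 b2 : R) (N1 N2 : Vec4) : Prop :=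
  let e1 := vadd (vscale a1 Xs) (vscale b1 Xt) in
  let e2 := vadd (vscale a2 Xs) (vscale b2 Xt) in
  vdot e1 e1 = 1 /\ vdot e2 e2 = 1 /\ vdot e1 e2 = 0 /\
  vdot N1 N1 = 1 /\ vdot N2 N2 = 1 /\ vdot N1 N2 = 0 /\
  vdot N1 Xs = 0 /\ vdot N1 Xt = 0 /\ vdot N2 Xs = 0 /\ vdot N2 Xt = 0.

(** h^k_{ij} = <h(e_i,e_j), N_k> = <X_{ij-direction}, N_k> (the normal
    component of the second derivative, paired with N_k). *)
Definition hcoef (Xss Xst Xtt : Vec4) (a1 b1 a2 b2 : R) (N : Vec4)
  (i j : bool) : R :=
  let ai := if i then a1 else a2 in let bi := if i then b1 else b2 in
  let aj := if j then a1 else a2 in let bj := if j then b1 else b2 in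
  vdot (d2X Xss Xst Xtt ai bi aj bj) N.
(* convention: index 1 = true, index 2 = false *)

(** Gaussian curvature (Gauss equation):
    K = sum_k (h^k_11 h^k_22 - (h^k_12)^2). *)
Definition gauss_curv (Xss Xst Xtt : Vec4) (a1 b1 a2 b2 : R) (N1 N2 : Vec4) : R :=
  let h := hcoef Xss Xst Xtt a1 b1 a2 b2 in
  (h N1 true true * h N1 false false - h N1 true false * h N1 true false) +
  (h N2 true true * h N2 false false - h N2 true false * h N2 true false).

Definition normal_curv (Xss Xst Xtt : Vec4) (a1 b1 a2 b2 : R) (N1 N2 : Vec4) : R :=
  let h := hcoef Xss Xst Xtt a1 b1 a2 b2 in
  (h N1 true true * h N2 false true - h N2 true true * h N1 false true) +
  (h N1 true false * h N2 false false - h N2 true false * h N1 false false).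

(* Since k2 = k3, the Frenet equations give (V2 + V4)' = -k1 V1, so
   X_s = (1 - t k1/sqrt 2) V1, X_st = -(k1/sqrt 2) V1 and X_tt = 0.  As
   1 - t k1/sqrt 2 <> 0, every normal vector is orthogonal to V1, hence to X_st
   and X_tt.  The second fundamental form is therefore h(e_i, e_j) = a_i a_j X_ss
   (normal part) for e_i = a_i X_s + b_i X_t: each component h^k is a rank-one
   symmetric form, so both the Gauss-equation determinants and the normal
   curvature vanish. *)

From Stdlib Require Import Reals Lra.
Open Scope R_scope.

Definition vzero : Vec4 := mkV4 0 0 0 0.

Lemma vdot_scalel a u v : vdot (vscale a u) v = a * vdot u v.
Proof. destruct u, v; unfold vdot, vscale; simpl; ring. Qed.

Lemma vdot_comm u v : vdot u v = vdot v u.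
Proof. destruct u, v; unfold vdot; simpl; ring. Qed.

Lemma vdot0l v : vdot vzero v = 0.
Proof. destruct v; unfold vdot; simpl; ring. Qed.

Lemma vderiv_unique f x l1 l2 : vderiv f x l1 -> vderiv f x l2 -> l1 = l2.
Proof.
  destruct l1, l2; intros (A1 & A2 & A3 & A4) (B1 & B2 & B3 & B4); simpl in *.
  f_equal; eapply uniqueness_limite; eauto.
Qed.

Lemma vderiv_const v x : vderiv (fun _ => v) x vzero.
Proof. repeat split; apply derivable_pt_lim_const. Qed.

Lemma vderiv_add f g x l1 l2 : vderiv f x l1 -> vderiv g x l2 ->
  vderiv (fun u => vadd (f u) (g u)) x (vadd l1 l2).
Proof.
  intros (A1 & A2 & A3 & A4) (B1 & B2 & B3 & B4); repeat split; simpl;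
    apply (derivable_pt_lim_plus (fun u => _ (f u)) (fun u => _ (g u))); auto.
Qed.

Lemma vderiv_scale a f x l : vderiv f x l ->
  vderiv (fun u => vscale a (f u)) x (vscale a l).
Proof.
  intros (A1 & A2 & A3 & A4); repeat split; simpl;
    apply (derivable_pt_lim_scal (fun u => _ (f u))); auto.
Qed.

Lemma vderiv_scalel f v x l : derivable_pt_lim f x l ->
  vderiv (fun u => vscale (f u) v) x (vscale l v).
Proof. intro Hf; repeat split; apply derivable_pt_lim_scal_right, Hf. Qed.

Lemma vderiv_near f g x l e : 0 < e ->
  (forall y, Rabs (y - x) < e -> f y = g y) -> vderiv f x l -> vderiv g x l.
Proof.
  intros He Hfg (A1 & A2 & A3 & A4).
  assert (Hx : x - e < x < x + e) by lra.
  assert (Hball : forall y, x - e < y < x + e -> f y = g y)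
    by (intros y Hy; apply Hfg, Rabs_def1; lra).
  repeat split; (eapply derivable_pt_lim_locally_ext; [exact Hx | | eassumption]);
    intros y Hy; cbv beta; rewrite (Hball y Hy); reflexivity.
Qed.

Lemma derivable_pt_lim_affine a b x :
  derivable_pt_lim (fun w => a + w * b) x b.
Proof.
  pose proof (derivable_pt_lim_plus (fun _ => a) (fun w => w * b) x _ _
    (derivable_pt_lim_const a x)
    (derivable_pt_lim_scal_right _ _ _ b (derivable_pt_lim_id x))) as H.
  rewrite Rplus_0_l, Rmult_1_l in H; exact H.
Qed.

Lemma hcoef_of_ortho Xss Xst Xtt a1 b1 a2 b2 N i j :
  vdot Xst N = 0 -> vdot Xtt N = 0 ->
  hcoef Xss Xst Xtt a1 b1 a2 b2 N i j =
  (if i then a1 else a2) * (if j then a1 else a2) * vdot Xss N.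
Proof.
  intros Hst Htt; unfold hcoef; cbv zeta.
  set (a := if i then a1 else a2); set (b := if i then b1 else b2).
  set (c := if j then a1 else a2); set (d := if j then b1 else b2).
  transitivity (a * c * vdot Xss N + (a * d + b * c) * vdot Xst N
                + b * d * vdot Xtt N).
  - destruct Xss, Xst, Xtt, N; unfold vdot, d2X, vadd, vscale; simpl; ring.
  - rewrite Hst, Htt; ring.
Qed.

Lemma curvatures_eq0_of_ortho Xss Xst Xtt a1 b1 a2 b2 N1 N2 :
  vdot Xst N1 = 0 -> vdot Xtt N1 = 0 -> vdot Xst N2 = 0 -> vdot Xtt N2 = 0 ->
  gauss_curv Xss Xst Xtt a1 b1 a2 b2 N1 N2 = 0 /\
  normal_curv Xss Xst Xtt a1 b1 a2 b2 N1 N2 = 0.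
Proof.
  intros Hst1 Htt1 Hst2 Htt2; unfold gauss_curv, normal_curv; cbv zeta.
  rewrite !(hcoef_of_ortho _ _ _ _ _ _ _ N1 _ _ Hst1 Htt1),
          !(hcoef_of_ortho _ _ _ _ _ _ _ N2 _ _ Hst2 Htt2).
  split; ring.
Qed.

Section RuledSurface.

Variables (I : R -> Prop) (gamma V1 V2 V3 V4 : R -> Vec4) (k1 k2 k3 : R -> R).
Hypothesis Hfrenet : frenet I gamma V1 V2 V3 V4 k1 k2 k3.
Hypothesis Hk23 : forall s, I s -> k2 s = k3 s.

Let X := ruled_X gamma V2 V4.

Lemma vderiv_V2_add_V4 s : I s ->
  vderiv (fun u => vadd (V2 u) (V4 u)) s (vscale (- k1 s) (V1 s)).
Proof.
  intro Is; destruct (Hfrenet s Is) as (_ & _ & D2 & _ & D4).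
  replace (vscale (- k1 s) (V1 s)) with
    (vadd (vadd (vscale (- k1 s) (V1 s)) (vscale (k2 s) (V3 s)))
          (vscale (- k3 s) (V3 s))).
  - exact (vderiv_add _ _ _ _ _ D2 D4).
  - rewrite (Hk23 s Is); destruct (V1 s), (V3 s);
      unfold vadd, vscale; simpl; f_equal; ring.
Qed.

Lemma ruled_X_ds s t : I s ->
  vderiv (fun u => X u t) s (vscale (1 + t * (- k1 s / sqrt 2)) (V1 s)).
Proof.
  intro Is; destruct (Hfrenet s Is) as (Dg & _).
  replace (vscale (1 + t * (- k1 s / sqrt 2)) (V1 s)) with
    (vadd (V1 s) (vscale (t / sqrt 2) (vscale (- k1 s) (V1 s)))).
  - exact (vderiv_add _ _ _ _ _ Dg (vderiv_scale _ _ _ _ (vderiv_V2_add_V4 s Is))).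
  - destruct (V1 s); unfold vadd, vscale; simpl; f_equal; field;
      apply Rgt_not_eq, sqrt_lt_R0; lra.
Qed.

Lemma ruled_X_dt s t :
  vderiv (fun w => X s w) t (vscale (/ sqrt 2) (vadd (V2 s) (V4 s))).
Proof.
  replace (vscale (/ sqrt 2) (vadd (V2 s) (V4 s))) with
    (vadd vzero (vscale (1 * / sqrt 2) (vadd (V2 s) (V4 s)))).
  - apply vderiv_add; [apply vderiv_const |].
    apply vderiv_scalel; unfold Rdiv.
    apply derivable_pt_lim_scal_right, derivable_pt_lim_id.
  - destruct (V2 s), (V4 s); unfold vadd, vscale, vzero; simpl; f_equal; ring.
Qed.

End RuledSurface.

Theorem corollary9
  (I J : R -> Prop) (gamma V1 V2 V3 V4 : R -> Vec4) (k1 k2 k3 : R -> R) :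
  is_open_interval I -> is_open_interval J ->
  vsmooth_on I gamma ->
  vsmooth_on I V1 -> vsmooth_on I V2 -> vsmooth_on I V3 -> vsmooth_on I V4 ->
  smooth_on I k1 -> smooth_on I k2 -> smooth_on I k3 ->
  (forall s, I s -> orthonormal4 (V1 s) (V2 s) (V3 s) (V4 s)) ->
  frenet I gamma V1 V2 V3 V4 k1 k2 k3 ->
  (forall s, I s -> k2 s = k3 s) ->
  (forall s t, I s -> J t -> 1 - t / sqrt 2 * k1 s <> 0) ->
  forall Xs Xt Xss Xst Xtt : R -> R -> Vec4,
    partials_of (ruled_X gamma V2 V4) I J Xs Xt Xss Xst Xtt ->
    forall s t, I s -> J t ->
    forall (a1 b1 a2 b2 : R) (N1 N2 : Vec4),
      adapted_frame (Xs s t) (Xt s t) a1 b1 a2 b2 N1 N2 ->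
      gauss_curv (Xss s t) (Xst s t) (Xtt s t) a1 b1 a2 b2 N1 N2 = 0 /\
      normal_curv (Xss s t) (Xst s t) (Xtt s t) a1 b1 a2 b2 N1 N2 = 0.
Proof.
  intros _ (_ & _ & HJopen) _ _ _ _ _ _ _ _ _ Hfr Hk Hreg
    Xs Xt Xss Xst Xtt HP s t Is Jt a1 b1 a2 b2 N1 N2 HF.
  destruct (HJopen t Jt) as (e & He & Hball).
  pose (c w := 1 + w * (- k1 s / sqrt 2)).
  assert (HXs : forall w, J w -> Xs s w = vscale (c w) (V1 s)).
  { intros w Jw; destruct (HP s w Is Jw) as (P & _).
    eapply vderiv_unique; [exact P | eapply ruled_X_ds; eassumption]. }
  assert (HXt : forall w, J w -> Xt s w = vscale (/ sqrt 2) (vadd (V2 s) (V4 s))).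
  { intros w Jw; destruct (HP s w Is Jw) as (_ & P & _).
    eapply vderiv_unique; [exact P | apply ruled_X_dt]. }
  destruct (HP s t Is Jt) as (_ & _ & _ & Pst & Ptt).
  assert (HXst : Xst s t = vscale (- k1 s / sqrt 2) (V1 s)).
  { apply (vderiv_unique _ _ _ _ Pst); eapply vderiv_near; [exact He | |].
    - intros y Hy; symmetry; apply HXs, Hball, Hy.
    - apply vderiv_scalel, derivable_pt_lim_affine. }
  assert (HXtt : Xtt s t = vzero).
  { apply (vderiv_unique _ _ _ _ Ptt); eapply vderiv_near; [exact He | |].
    - intros y Hy; symmetry; apply HXt, Hball, Hy.
    - apply vderiv_const. }
  assert (Hnormal : forall N, vdot N (Xs s t) = 0 ->
                      vdot (Xst s t) N = 0 /\ vdot (Xtt s t) N = 0).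
  { intros N HN; rewrite HXs, vdot_comm, vdot_scalel in HN by exact Jt.
    assert (HV1 : vdot (V1 s) N = 0).
    { destruct (Rmult_integral _ _ HN) as [Hc | Hc]; [| exact Hc].
      exfalso; apply (Hreg s t Is Jt); unfold c in Hc; rewrite <- Hc; field.
      apply Rgt_not_eq, sqrt_lt_R0; lra. }
    rewrite HXst, HXtt, vdot_scalel, HV1, vdot0l; split; ring. }
  destruct HF as (_ & _ & _ & _ & _ & _ & HN1 & _ & HN2 & _).
  destruct (Hnormal N1 HN1), (Hnormal N2 HN2).
  apply curvatures_eq0_of_ortho; assumption.
Qed.
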